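(* Let $u$ be a weak solution of the two-phase problem in $\Omega$. Then $u^-=\min\{u,0\}$ is a weak solution of the one-phase problem $\Delta w=0$ in $\{w<0\}$, $|\nabla w|^2=(x_2^0-x_2)^+$ on $\partial\{w<0\}$, in $\Omega\cap\{u\le0\}$.
   Context: Let $\Omega\subset\mathbb{R}^2$ be open and $x_2^0\in\mathbb{R}$ a constant; $\chi_A$ denotes the characteristic function of $A$. A weak solution of the two-phase problem is $u\in W^{1,2}(\Omega)$ with: (i) $u\in C(\Omega)\cap C^2(\Omega\cap\{u\ne0\})$; (ii) for every $\phi=(\phi_1,\phi_2)\in C^1_0(\Omega;\mathbb{R}^2)$, $0=\int_\Omega(|\nabla u|^2\mathrm{div}\phi-2\nabla u\,D\phi\,\nabla u)dx+\int_{\Omega\cap\{x_2<x_2^0\}}((x_2^0-x_2)\chi_{\{u<0\}}\mathrm{div}\phi-\chi_{\{u<0\}}\phi_2)dx+\int_{\Omega\cap\{x_2>x_2^0\}}((x_2-x_2^0)\chi_{\{u>0\}}\mathrm{div}\phi+\chi_{\{u>0\}}\phi_2)dx$; (iii) $\partial\{u<0\}\cap\Omega$ is locally a $C^{2,\alpha}$ curve. A weak solution of the one-phase problem in a domain $U$ is a non-positive $w\in W^{1,2}(U)$ with: (i) $w\in C(U)\cap C^2(U\cap\{w<0\})$; (ii) for every $\phi\in C^1_0(U;\mathbb{R}^2)$, $0=\int_U(|\nabla w|^2\mathrm{div}\phi-2\nabla w\,D\phi\,\nabla w)dx+\int_{U\cap\{x_2<x_2^0\}}((x_2^0-x_2)\chi_{\{w<0\}}\mathrm{div}\phi-\chi_{\{w<0\}}\phi_2)dx$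 (vanishing first domain variation of $\int(|\nabla v|^2+(x_2^0-x_2)^+\chi_{\{v<0\}})dx$); (iii) $\partial\{w<0\}\cap U$ is locally a $C^{2,\alpha}$ curve. *)

From HB Require Import structures.
From mathcomp Require Import all_boot all_order all_algebra.
From mathcomp Require Import all_classical all_reals all_analysis.
Set Implicit Arguments. Unset Strict Implicit. Unset Printing Implicit Defensive.
Import Order.TTheory GRing.Theory Num.Theory.
Import numFieldNormedType.Exports.
Local Open Scope classical_set_scope.
Local Open Scope ring_scope.

Section Defs.
Variable R : realType.

Notation pt := (R * R)%type.

Definition leb2 := ((@lebesgue_measure R) \x (@lebesgue_measure R))%E.

Definition pd1 (f : pt -> R) : pt -> R :=
  fun x => derive1 (fun t => f (t, x.2)) x.1.
Definition pd2 (f : pt -> R) : pt -> R :=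
  fun x => derive1 (fun t => f (x.1, t)) x.2.
Definition pdir (b : bool) (f : pt -> R) : pt -> R := if b then pd2 f else pd1 f.
Definition has_pdir (b : bool) (f : pt -> R) (x : pt) : Prop :=
  if b then derivable (fun t => f (x.1, t)) x.2 1
  else derivable (fun t => f (t, x.2)) x.1 1.
Definition pdn (s : seq bool) (f : pt -> R) : pt -> R := foldr pdir f s.

Definition Ck_on (k : nat) (U : set pt) (f : pt -> R) : Prop :=
  (forall s : seq bool, (size s < k)%N -> forall b x, U x -> has_pdir b (pdn s f) x) /\
  (forall s : seq bool, (size s <= k)%N -> forall x, U x -> {for x, continuous (pdn s f)}).

Definition smooth_on (U : set pt) (f : pt -> R) : Prop := forall k, Ck_on k U f.

Definition continuous_on (U : set pt) (f : pt -> R) : Prop :=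
  forall x, U x -> {for x, continuous f}.

Definition compact_support_in (U : set pt) (f : pt -> R) : Prop :=
  exists K : set pt, [/\ compact K, K `<=` U & forall x, ~ K x -> f x = 0].

Definition C10 (U : set pt) (phi1 phi2 : pt -> R) : Prop :=
  [/\ Ck_on 1 setT phi1, Ck_on 1 setT phi2,
      compact_support_in U phi1 & compact_support_in U phi2].

Definition L2 (U : set pt) (f : pt -> R) : Prop :=
  measurable_fun U f /\ (\int[leb2]_(x in U) ((f x) ^+ 2)%:E < +oo)%E.

Definition weak_grad (U : set pt) (u g1 g2 : pt -> R) : Prop :=
  forall psi : pt -> R, smooth_on setT psi -> compact_support_in U psi ->
    Rintegral leb2 U (fun x => u x * pd1 psi x) = - Rintegral leb2 U (fun x => g1 x * psi x) /\
    Rintegral leb2 U (fun x => u x * pd2 psi x) = - Rintegral leb2 U (fun x => g2 x * psi x).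

Definition W12_with (U : set pt) (u g1 g2 : pt -> R) : Prop :=
  [/\ L2 U u, L2 U g1, L2 U g2 & weak_grad U u g1 g2].

Definition bdry (A : set pt) : set pt := closure A `\` interior A.

Definition C2alpha (alpha : R) (g : R -> R) : Prop :=
  (forall t, derivable g t 1) /\ (forall t, derivable (derive1 g) t 1) /\
  exists M : R, forall a b : R, `|derive1 (derive1 g) a - derive1 (derive1 g) b| <= M * powR `|a - b| alpha
  .

(* "bdry A \cap U is locally a C^{2,alpha} curve": near each of its points it is,
   in suitably rotated coordinates (y1, y2) = (c x1 + s x2, - s x1 + c x2), the
   graph y2 = g(y1) of a C^{2,alpha} function g. *)
Definition loc_C2alpha_curve (alpha : R) (U A : set pt) : Prop :=
  forall x0, U x0 -> bdry A x0 ->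
    exists r : R, exists c s : R, exists g : R -> R,
      [/\ 0 < r, c ^+ 2 + s ^+ 2 = 1, C2alpha alpha g &
          forall x : pt, ball x0 r x ->
            (bdry A x <-> - s * x.1 + c * x.2 = g (c * x.1 + s * x.2))].

Definition chi (A : set pt) (x : pt) : R := \1_A x.

Definition divf (phi1 phi2 : pt -> R) (x : pt) : R := pd1 phi1 x + pd2 phi2 x.

(* grad u . D phi . grad u, with grad u = (g1, g2) *)
Definition quadD (g1 g2 phi1 phi2 : pt -> R) (x : pt) : R :=
  g1 x * g1 x * pd1 phi1 x + g1 x * g2 x * (pd2 phi1 x + pd1 phi2 x)
  + g2 x * g2 x * pd2 phi2 x.

Definition two_phase_weak_sol (alpha : R) (Omega : set pt) (x20 : R) (u : pt -> R) : Prop :=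
  exists g1 g2 : pt -> R,
  [/\ W12_with Omega u g1 g2,
      continuous_on Omega u /\ Ck_on 2 (Omega `&` [set x | u x != 0]) u,
      (forall phi1 phi2 : pt -> R, C10 Omega phi1 phi2 ->
        0 = Rintegral leb2 Omega (fun x =>
              (g1 x ^+ 2 + g2 x ^+ 2) * divf phi1 phi2 x - 2 * quadD g1 g2 phi1 phi2 x)
          + Rintegral leb2 (Omega `&` [set x | x.2 < x20]) (fun x =>
              (x20 - x.2) * chi [set y | u y < 0] x * divf phi1 phi2 x
              - chi [set y | u y < 0] x * phi2 x)
          + Rintegral leb2 (Omega `&` [set x | x.2 > x20]) (fun x =>
              (x.2 - x20) * chi [set y | u y > 0] x * divf phi1 phi2 x
              + chi [set y | u y > 0] x * phi2 x))
    & loc_C2alpha_curve alpha Omega [set x | u x < 0]].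

Definition one_phase_weak_sol (alpha : R) (U : set pt) (x20 : R) (w : pt -> R) : Prop :=
  exists g1 g2 : pt -> R,
  [/\ (forall x, U x -> w x <= 0) /\ W12_with U w g1 g2,
      continuous_on U w /\ Ck_on 2 (U `&` [set x | w x < 0]) w,
      (forall phi1 phi2 : pt -> R, C10 U phi1 phi2 ->
        0 = Rintegral leb2 U (fun x =>
              (g1 x ^+ 2 + g2 x ^+ 2) * divf phi1 phi2 x - 2 * quadD g1 g2 phi1 phi2 x)
          + Rintegral leb2 (U `&` [set x | x.2 < x20]) (fun x =>
              (x20 - x.2) * chi [set y | w y < 0] x * divf phi1 phi2 x
              - chi [set y | w y < 0] x * phi2 x))
    & loc_C2alpha_curve alpha U [set x | w x < 0]].

End Defs.

From HB Require Import structures.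
From mathcomp Require Import all_boot all_order all_algebra.
From mathcomp Require Import all_classical all_reals all_analysis.
From mathcomp Require Import lra measurable_realfun.
Set Implicit Arguments.
Unset Strict Implicit.
Unset Printing Implicit Defensive.

Import Order.TTheory GRing.Theory Num.Theory.
Import numFieldNormedType.Exports.
Local Open Scope classical_set_scope.
Local Open Scope ring_scope.

(* On the open set U := interior (Omega `&` [set x | u x <= 0]) the function
   min(u, 0) coincides with u, so continuity, C^2 regularity and membership in
   W^{1,2} (with the same weak gradient) pass from Omega to U, and
   {min(u, 0) < 0} = {u < 0} carries the free boundary over unchanged.  A test
   field with compact support in U vanishes together with its first derivatives
   off U, so the Dirichlet and negative-phase terms of the two-phase domain
   variation over Omega equal the same terms over U, while the positive-phase
   term vanishes because u <= 0 on U. *)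

Section Rintegral_domain.
Context d (T : measurableType d) (R : realType) (mu : {measure set T -> \bar R}).

Lemma Rintegral_setS (A B : set T) (f g : T -> R) : A `<=` B ->
  (forall x, A x -> f x = g x) -> (forall x, B x -> ~ A x -> g x = 0) ->
  \int[mu]_(x in A) f x = \int[mu]_(x in B) g x.
Proof.
move=> AB fg g0; rewrite Rintegral_mkcond [RHS]Rintegral_mkcond.
apply: eq_Rintegral => x _; rewrite /patch.
have [Ax|nAx] := pselect (A x); first by rewrite !mem_set ?fg //; exact: AB.
rewrite memNset //; have [Bx|nBx] := pselect (B x).
  by rewrite mem_set // g0.
by rewrite memNset.
Qed.

Lemma Rintegral_eq0 (A : set T) (f : T -> R) : (forall x, A x -> f x = 0) ->
  \int[mu]_(x in A) f x = 0.
Proof.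
move=> f0; rewrite (@eq_Rintegral _ _ _ mu _ (fun _ => 0)) => [|x /set_mem /f0 //].
by rewrite /Rintegral integral0.
Qed.
End Rintegral_domain.

Section Plane.
Context (R : realType).
Local Notation pt := (R * R)%type.

Lemma open_measurable_pair (A : set pt) : open A -> measurable A.
Proof.
move=> oA.
pose B (i : rat * rat * rat) : set pt :=
  ball ((ratr i.1.1, ratr i.1.2) : pt) (ratr i.2).
have -> : A = \bigcup_(i in [set i | B i `<=` A]) B i.
  apply/seteqP; split => [x Ax|x [i /= BiA]]; last exact: BiA.
  have /nbhs_ballP[e /= e0 xeA] : nbhs x A by exact: open_nbhs_nbhs.
  have [r] := @rat_in_itvoo R 0 (e / 2) ltac:(by rewrite divr_gt0).
  rewrite in_itv /= => /andP[r0 re].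
  have near_rat (y : R) : exists q : rat, ball (ratr q : R) (ratr r) y.
    have [q qy] := @rat_in_itvoo R (y - ratr r) (y + ratr r) ltac:(by lra).
    by exists q; apply: ball_sym; rewrite ball_itv.
  have [[q1 xq1] [q2 xq2]] := (near_rat x.1, near_rat x.2).
  exists (q1, q2, r) => //= y qy; apply: xeA.
  apply: (le_ball (e1 := ratr r + ratr r)); first by lra.
  have xq : ball ((ratr q1 : R, ratr q2 : R) : pt) (ratr r) x := conj xq1 xq2.
  exact: ball_triangle (ball_sym xq) qy.
rewrite bigcup_mkcond; apply: countable_bigcupT_measurable => [|i].
  exact: countableP.
case: ifP => _; last exact: measurable0.
have -> : B i =
    ball (ratr i.1.1 : R) (ratr i.2) `*` ball (ratr i.1.2 : R) (ratr i.2).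
  by apply/seteqP; split.
by apply: measurableX; rewrite ball_itv; exact: measurable_itv.
Qed.

Lemma open_near_eq (V : set pt) (f g : pt -> R) (x : pt) : open V ->
  (forall y, V y -> f y = g y) -> V x -> \forall y \near x, f y = g y.
Proof. by move=> oV fg Vx; apply: filterS fg _; exact: open_nbhs_nbhs. Qed.

Lemma near_eq_sections (f g : pt -> R) (x : pt) :
  (\forall y \near x, f y = g y) ->
  (\forall t \near x.1, f (t, x.2) = g (t, x.2)) /\
  (\forall t \near x.2, f (x.1, t) = g (x.1, t)).
Proof.
case: x => x1 x2 fg; split.
- exact: (cvg_pair cvg_id (cvg_cst x2)) _ fg.
- exact: (cvg_pair (cvg_cst x1) cvg_id) _ fg.
Qed.

Lemma near_eq_pdir (b : bool) (f g : pt -> R) (x : pt) :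
  (\forall y \near x, f y = g y) -> pdir b f x = pdir b g x.
Proof.
move=> /near_eq_sections[fg1 fg2].
by case: b; rewrite /pdir /pd1 /pd2 !derive1E; exact: near_eq_derive.
Qed.

Lemma near_eq_has_pdir (b : bool) (f g : pt -> R) (x : pt) :
  (\forall y \near x, f y = g y) -> has_pdir b f x -> has_pdir b g x.
Proof.
move=> /near_eq_sections[fg1 fg2].
by case: b; rewrite /has_pdir; exact: near_eq_derivable.
Qed.

Lemma near_eq_continuous (f g : pt -> R) (x : pt) :
  (\forall y \near x, f y = g y) -> {for x, continuous f} -> {for x, continuous g}.
Proof.
move=> fg cf; rewrite /prop_for /continuous_at -(nbhs_singleton fg).
exact: cvg_trans (near_eq_cvg fg) cf.
Qed.

Lemma pdn_eq_open (V : set pt) (f g : pt -> R) : open V ->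
  (forall x, V x -> f x = g x) -> forall s x, V x -> pdn s f x = pdn s g x.
Proof.
move=> oV fg; elim => [|b s IHs] x Vx /=; first exact: fg.
by apply: near_eq_pdir; exact: open_near_eq oV IHs Vx.
Qed.

Lemma Ck_on_eq_open (k : nat) (V W W' : set pt) (f g : pt -> R) : open V ->
  (forall x, V x -> f x = g x) -> W `<=` V `&` W' -> Ck_on k W' f -> Ck_on k W g.
Proof.
move=> oV fg WVW' [Cf_pdir Cf_cont].
have fg_near s x : W x -> \forall y \near x, pdn s f y = pdn s g y.
  by move=> /WVW'[Vx _]; exact: open_near_eq oV (pdn_eq_open oV fg s) Vx.
split=> [s ks b x Wx | s ks x Wx].
- apply: near_eq_has_pdir (fg_near s x Wx) _.
  by apply: Cf_pdir => //; case: (WVW' x Wx).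
- apply: near_eq_continuous (fg_near s x Wx) _.
  by apply: Cf_cont => //; case: (WVW' x Wx).
Qed.

Lemma compact_support_near0 (U : set pt) (psi : pt -> R) (x : pt) :
  compact_support_in U psi -> ~ U x -> \forall y \near x, psi y = 0.
Proof.
move=> [K [cK KU psi0]] Ux.
have oK : open (~` K).
  by apply: closed_openC; apply: compact_closed => //; exact: norm_hausdorff.
by apply: filterS psi0 _; apply: open_nbhs_nbhs; split => // /KU.
Qed.

Lemma compact_support_outside (U : set pt) (psi : pt -> R) (x : pt) :
  compact_support_in U psi -> ~ U x ->
  [/\ psi x = 0, pd1 psi x = 0 & pd2 psi x = 0].
Proof.
move=> /compact_support_near0 psi0 /psi0 psi0x; split.
- exact: nbhs_singleton psi0x.
- by have := near_eq_pdir false psi0x; rewrite /= /pd1 derive1_cst.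
- by have := near_eq_pdir true psi0x; rewrite /= /pd2 derive1_cst.
Qed.

Lemma compact_support_inS (U O : set pt) (psi : pt -> R) :
  U `<=` O -> compact_support_in U psi -> compact_support_in O psi.
Proof.
by move=> UO [K [cK KU psi0]]; exists K; split => //; exact: subset_trans UO.
Qed.

Lemma C10S (U O : set pt) (phi1 phi2 : pt -> R) :
  U `<=` O -> C10 U phi1 phi2 -> C10 O phi1 phi2.
Proof.
by move=> UO [C1 C2 /(compact_support_inS UO) ? /(compact_support_inS UO) ?].
Qed.

Lemma C10_outside (U : set pt) (phi1 phi2 : pt -> R) (x : pt) :
  C10 U phi1 phi2 -> ~ U x ->
  [/\ divf phi1 phi2 x = 0, phi2 x = 0 & forall g1 g2, quadD g1 g2 phi1 phi2 x = 0].
Proof.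
move=> [_ _ s1 s2] Ux.
have [_ d11 d12] := compact_support_outside s1 Ux.
have [p2 d21 d22] := compact_support_outside s2 Ux.
by split=> [||g1 g2]; rewrite /divf /quadD ?d11 ?d12 ?d21 ?d22 ?p2 ?(mulr0, addr0).
Qed.

Lemma L2_subset (U O : set pt) (f f' : pt -> R) :
  measurable O -> measurable U -> U `<=` O -> (forall x, U x -> f x = f' x) ->
  L2 O f' -> L2 U f.
Proof.
move=> mO mU UO ff' [mf' f'2_fin]; split.
  apply: eq_measurable_fun (measurable_funS mO UO mf') => x /set_mem Ux.
  by rewrite ff'.
apply: le_lt_trans f'2_fin.
under eq_integral => x /set_mem Ux do rewrite ff' //.
apply: ge0_subset_integral => // [|x _]; last by rewrite lee_fin sqr_ge0.
by apply/measurable_EFinP; exact: measurable_funX.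
Qed.

Lemma weak_grad_subset (U O : set pt) (u w g1 g2 : pt -> R) : U `<=` O ->
  (forall x, U x -> w x = u x) -> weak_grad O u g1 g2 -> weak_grad U w g1 g2.
Proof.
move=> UO wu grad_u psi psi_smooth psi_supp.
have [E1 E2] := grad_u psi psi_smooth (compact_support_inS UO psi_supp).
have out x : ~ U x -> [/\ psi x = 0, pd1 psi x = 0 & pd2 psi x = 0].
  exact: compact_support_outside psi_supp.
have toO (f g : pt -> R) :
    (forall x, U x -> f x = g x) -> (forall x, ~ U x -> g x = 0) ->
    Rintegral (@leb2 R) U f = Rintegral (@leb2 R) O g.
  by move=> fg g0; apply: Rintegral_setS => // x _; exact: g0.
split.
- rewrite (toO _ (fun x => u x * pd1 psi x)) ?(toO _ (fun x => g1 x * psi x)) //.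
  + by move=> x /out[-> _ _]; rewrite mulr0.
  + by move=> x /wu ->.
  + by move=> x /out[_ -> _]; rewrite mulr0.
- rewrite (toO _ (fun x => u x * pd2 psi x)) ?(toO _ (fun x => g2 x * psi x)) //.
  + by move=> x /out[-> _ _]; rewrite mulr0.
  + by move=> x /wu ->.
  + by move=> x /out[_ _ ->]; rewrite mulr0.
Qed.

Lemma W12_with_subset (U O : set pt) (u w g1 g2 : pt -> R) :
  measurable O -> measurable U -> U `<=` O -> (forall x, U x -> w x = u x) ->
  W12_with O u g1 g2 -> W12_with U w g1 g2.
Proof.
move=> mO mU UO wu [L2u L2g1 L2g2 grad_u]; split.
- exact: L2_subset mO mU UO wu L2u.
- exact: L2_subset mO mU UO (fun _ _ => erefl) L2g1.
- exact: L2_subset mO mU UO (fun _ _ => erefl) L2g2.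
- exact: weak_grad_subset UO wu grad_u.
Qed.

Definition dirichlet_variation (U : set pt) (g1 g2 phi1 phi2 : pt -> R) : R :=
  Rintegral (@leb2 R) U (fun x =>
    (g1 x ^+ 2 + g2 x ^+ 2) * divf phi1 phi2 x - 2 * quadD g1 g2 phi1 phi2 x).

Definition neg_phase_variation (U : set pt) (x20 : R) (A : set pt)
    (phi1 phi2 : pt -> R) : R :=
  Rintegral (@leb2 R) (U `&` [set x | x.2 < x20]) (fun x =>
    (x20 - x.2) * chi A x * divf phi1 phi2 x - chi A x * phi2 x).

Definition pos_phase_variation (U : set pt) (x20 : R) (A : set pt)
    (phi1 phi2 : pt -> R) : R :=
  Rintegral (@leb2 R) (U `&` [set x | x.2 > x20]) (fun x =>
    (x.2 - x20) * chi A x * divf phi1 phi2 x + chi A x * phi2 x).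

Lemma dirichlet_variationS (U O : set pt) (g1 g2 phi1 phi2 : pt -> R) :
  U `<=` O -> C10 U phi1 phi2 ->
  dirichlet_variation U g1 g2 phi1 phi2 = dirichlet_variation O g1 g2 phi1 phi2.
Proof.
move=> UO Cphi; apply: Rintegral_setS => // x _ Ux.
by have [-> _ ->] := C10_outside Cphi Ux; rewrite !(mulr0, subr0).
Qed.

Lemma neg_phase_variationS (U O : set pt) (x20 : R) (A : set pt)
    (phi1 phi2 : pt -> R) :
  U `<=` O -> C10 U phi1 phi2 ->
  neg_phase_variation U x20 A phi1 phi2 = neg_phase_variation O x20 A phi1 phi2.
Proof.
move=> UO Cphi; apply: Rintegral_setS => [x [/UO]|//|x [_ x2_lt] UIx] //.
have Ux : ~ U x by move=> Ux; apply: UIx; split.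
by have [-> -> _] := C10_outside Cphi Ux; rewrite !(mulr0, subr0).
Qed.

Lemma pos_phase_variation_eq0 (U O : set pt) (x20 : R) (A : set pt)
    (phi1 phi2 : pt -> R) :
  U `<=` O -> C10 U phi1 phi2 -> (forall x, U x -> ~ A x) ->
  pos_phase_variation O x20 A phi1 phi2 = 0.
Proof.
move=> UO Cphi UnA; apply: Rintegral_eq0 => x _.
have [Ux|Ux] := pselect (U x).
  have -> : chi A x = 0 by rewrite /chi indicE (memNset (UnA x Ux)).
  by rewrite !(mulr0, mul0r, addr0).
by have [-> -> _] := C10_outside Cphi Ux; rewrite !(mulr0, addr0).
Qed.

Lemma one_phase_variation (U O : set pt) (x20 : R) (u g1 g2 phi1 phi2 : pt -> R) :
  U `<=` O -> (forall x, U x -> u x <= 0) -> C10 U phi1 phi2 ->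
  0 = dirichlet_variation O g1 g2 phi1 phi2
      + neg_phase_variation O x20 [set y | u y < 0] phi1 phi2
      + pos_phase_variation O x20 [set y | u y > 0] phi1 phi2 ->
  0 = dirichlet_variation U g1 g2 phi1 phi2
      + neg_phase_variation U x20 [set y | u y < 0] phi1 phi2.
Proof.
move=> UO u_le0 Cphi; rewrite (pos_phase_variation_eq0 x20 UO Cphi) ?addr0.
  by rewrite (dirichlet_variationS g1 g2 UO Cphi)
             (neg_phase_variationS x20 _ UO Cphi).
by move=> x /u_le0; rewrite /= leNgt => /negP.
Qed.
End Plane.

Theorem proposition2p1 (R : realType) (alpha : R) (Omega : set (R * R)%type)
  (x20 : R) (u : (R * R)%type -> R) :
  0 < alpha < 1 -> open Omega ->
  two_phase_weak_sol alpha Omega x20 u ->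
  one_phase_weak_sol alpha (interior (Omega `&` [set x | u x <= 0])) x20
    (fun x => Num.min (u x) 0).
Proof.
move=> _ oO [g1 [g2 [W12u [cont_u C2u] two_phase curve]]].
set U := interior _.
have oU : open U := @open_interior _ _.
have UO : U `<=` Omega by move=> x /interior_subset[].
have u_le0 x : U x -> u x <= 0 by move=> /interior_subset[].
have wu x : U x -> Num.min (u x) 0 = u x by move=> /u_le0 /min_l.
have uw x : U x -> u x = Num.min (u x) 0 by move=> /wu.
have negE : [set y | Num.min (u y) 0 < 0] = [set y | u y < 0].
  by apply/seteqP; split => y /=; rewrite gt_min ltxx orbF.
exists g1, g2; split.
- split; first by move=> x _; rewrite ge_min lexx orbT.
  exact: W12_with_subset (open_measurable_pair oO) (open_measurable_pair oU) UO wu W12u.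
- split=> [x Ux|].
    exact: near_eq_continuous (open_near_eq oU uw Ux) (cont_u x (UO x Ux)).
  apply: Ck_on_eq_open oU uw _ C2u => x [Ux].
  by rewrite /= wu // => /ltr0_neq0 ux_neq0; do !split => //; exact: UO.
- move=> phi1 phi2 Cphi; rewrite negE.
  exact: one_phase_variation UO u_le0 Cphi (two_phase _ _ (C10S UO Cphi)).
- by rewrite negE => x Ux; exact: curve x (UO x Ux).
Qed.
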